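(* Let $\tilde\varepsilon_0:\mathbb R\to\mathbb R$ be any function supported in $[\frac43\delta^{\frac1{2i_1}},\frac53\delta^{\frac1{2i_1}}]$, and let $u_0(x)=\sum_{l=1}^L\delta^{\frac1{2i_l}}\Psi_{i_l}\big((x-y_{l,0})\delta^{-\alpha_l}\big)+\tilde\varepsilon_0(x)$. Then $h_l=u_0(y_{l,0})-u_0(0)$ for every $l$, and: $h_l<0$ for $2\le l\le L$; $h_{l+1}<h_l$ for $2\le l\le L-1$; and there is a constant $C$ independent of $\delta$ such that for all sufficiently small $\delta>0$ and all $2\le l\le L$, $$|h_l|\le C\,\delta^{\frac{1}{2i_m(2i_m+1)}}.$$
   Context: For a positive integer $i$, $\Psi_i:\mathbb R\to\mathbb R$ denotes the odd, strictly decreasing, analytic solution of $-\frac{1}{2i}\Psi_i+\frac{2i+1}{2i}X\Psi_i'(X)+\Psi_i(X)\Psi_i'(X)=0$ satisfying $\Psi_i(X)=-X+X^{2i+1}+O(X^{4i+1})$ as $X\to0$. It satisfies $\Psi_i(X)=-\operatorname{sgn}(X)|X|^{\frac1{2i+1}}+\operatorname{sgn}(X)\frac{|X|^{-1+\frac{2}{2i+1}}}{2i+1}+O(|X|^{-2+\frac{3}{2i+1}})$ as $|X|\to\infty$, and $|\Psi_i(X)|\approx |X|(1+|X|)^{\frac1{2i+1}-1}$ for all $X$. Fix an integer $L\ge2$ and positive integers $i_1,\dots,i_L$; let $i_m=\max_l i_l$ and $\alpha_l=1+\frac1{2i_l}$. Let $\delta\in(0,1)$. For $l=1,\dots,L$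 put $y_{l,0}=3(l-1)\delta^{1/(2i_1)}$ and $h_l=\sum_{l'=1}^L\delta^{\frac1{2i_{l'}}}\Big(\Psi_{i_{l'}}\big(\tfrac{y_{l,0}-y_{l',0}}{\delta^{\alpha_{l'}}}\big)-\Psi_{i_{l'}}\big(\tfrac{-y_{l',0}}{\delta^{\alpha_{l'}}}\big)\Big)$. Here $A\approx B$ means $C^{-1}B\le A\le CB$ with $C$ independent of $X$. *)

From Stdlib Require Import Reals Lra Lia List.
Open Scope R_scope.

Definition sgn (x : R) : R := if Rlt_dec 0 x then 1 else if Rlt_dec x 0 then -1 else 0.

Definition sumL (L : nat) (f : nat -> R) : R :=
  fold_right Rplus 0 (map f (seq 1 L)).

Definition imax (L : nat) (i : nat -> nat) : nat :=
  fold_right Nat.max 0%nat (map i (seq 1 L)).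

Definition alpha (k : nat) : R := 1 + / (2 * INR k).

(* Properties defining Psi_k (odd, strictly decreasing, real-analytic solution of
   -1/(2k) Psi + (2k+1)/(2k) X Psi' + Psi Psi' = 0 with Psi(X) = -X + X^(2k+1) + O(X^(4k+1))),
   together with the two facts the paper states about it. *)
Definition IsPsi (k : nat) (P : R -> R) : Prop :=
  (forall X, exists d, derivable_pt_lim P X d /\
      - (/ (2 * INR k)) * P X + ((2 * INR k + 1) / (2 * INR k)) * X * d + P X * d = 0) /\
  (forall X, P (- X) = - P X) /\
  (forall X Y, X < Y -> P Y < P X) /\
  (forall x0, exists r, 0 < r /\ exists a : nat -> R,
      forall x, Rabs (x - x0) < r -> infinite_sum (fun n => a n * (x - x0) ^ n) (P x)) /\
  (exists C r, 0 < r /\ forall X, Rabs X < r ->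
      Rabs (P X - (- X + X ^ (2 * k + 1))) <= C * Rabs X ^ (4 * k + 1)) /\
  (exists C M, 0 < M /\ forall X, M <= Rabs X ->
      Rabs (P X - (- sgn X * Rpower (Rabs X) (/ (2 * INR k + 1))
                  + sgn X * Rpower (Rabs X) (-1 + 2 / (2 * INR k + 1)) / (2 * INR k + 1)))
      <= C * Rpower (Rabs X) (-2 + 3 / (2 * INR k + 1))) /\
  (exists C, 0 < C /\ forall X,
      / C * (Rabs X * Rpower (1 + Rabs X) (/ (2 * INR k + 1) - 1)) <= Rabs (P X) /\
      Rabs (P X) <= C * (Rabs X * Rpower (1 + Rabs X) (/ (2 * INR k + 1) - 1))).

Definition y0 (i : nat -> nat) (delta : R) (l : nat) : R :=
  3 * INR (l - 1) * Rpower delta (/ (2 * INR (i 1%nat))).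

Definition h (L : nat) (i : nat -> nat) (Psi : nat -> R -> R) (delta : R) (l : nat) : R :=
  sumL L (fun l' =>
    Rpower delta (/ (2 * INR (i l'))) *
      (Psi (i l') ((y0 i delta l - y0 i delta l') / Rpower delta (alpha (i l')))
       - Psi (i l') (- y0 i delta l' / Rpower delta (alpha (i l'))))).

Definition u0 (L : nat) (i : nat -> nat) (Psi : nat -> R -> R) (delta : R)
  (eps : R -> R) (x : R) : R :=
  sumL L (fun l => Rpower delta (/ (2 * INR (i l))) *
     Psi (i l) ((x - y0 i delta l) * Rpower delta (- alpha (i l)))) + eps x.

From Stdlib Require Import Reals Lra Lia List.
Open Scope R_scope.

(* Write h_l = sum_{l'} T(l, l') with T(l, l') = delta^(1/(2 i_l')) *
   (Psi_{i_l'}((y_{l,0} - y_{l',0}) D_l'^-1) - Psi_{i_l'}(-y_{l',0} D_l'^-1)),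
   D_l' = delta^(alpha_l').
   - Since eps vanishes at 0 and at every centre y_{l,0} = 3(l-1) delta^(1/(2 i_1)),
     u_0(y_{l,0}) - u_0(0) is the sum of the differences of the Psi profiles,
     which is h_l.
   - Each Psi is strictly decreasing and the centres strictly increase with l,
     so every T(., l') strictly decreases along the centres; as T(1, l') = 0 this
     gives h_l < 0 for l >= 2 and h_{l+1} < h_l.
   - The two-sided bound on |Psi_k| gives |Psi_k(X)| <= C |X|^(1/(2k+1)); both
     arguments of Psi in T are O(delta^(1/(2 i_1) - alpha_l')), and the
     resulting power of delta, 1/(2 i_1 (2 i_l' + 1)), is at least
     1/(2 i_m (2 i_m + 1)); summing the L term-wise bounds gives the estimate. *)

Lemma Rpower_pos x y : 0 < Rpower x y.
Proof. unfold Rpower; apply exp_pos. Qed.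

Lemma Rpower_le_base_nonpos a b q : 0 < a <= b -> q <= 0 -> Rpower b q <= Rpower a q.
Proof.
  intros Hab Hq.
  assert (Hinv : forall x, Rpower x q = / Rpower x (- q))
    by (intro x; rewrite <- Rpower_Ropp, Ropp_involutive; reflexivity).
  rewrite !Hinv.
  apply Rinv_le_contravar; [apply Rpower_pos | apply Rle_Rpower_l; lra].
Qed.

Lemma Rpower_le_exp_base_lt1 d a b : 0 < d < 1 -> b <= a -> Rpower d a <= Rpower d b.
Proof.
  intros Hd Hab.
  assert (Hinv : forall q, Rpower d q = Rpower (/ d) (- q)).
  { intro q. unfold Rpower. rewrite ln_Rinv by lra. f_equal; ring. }
  rewrite !Hinv. apply Rle_Rpower; [|lra].
  rewrite <- Rinv_1. apply Rinv_le_contravar; lra.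
Qed.

Section PsiFacts.
Variables (k : nat) (P : R -> R).
Hypothesis HP : IsPsi k P.

Lemma Psi_nonincreasing a b : a <= b -> P b <= P a.
Proof.
  destruct HP as (_ & _ & Hdec & _). intros Hab.
  destruct (Rle_lt_or_eq_dec _ _ Hab) as [H | ->]; [left; apply Hdec |]; lra.
Qed.

Lemma Psi_zero : P 0 = 0.
Proof. destruct HP as (_ & Hodd & _). pose proof (Hodd 0). rewrite Ropp_0 in *. lra. Qed.

Lemma Psi_abs_mono X M : Rabs X <= M -> Rabs (P X) <= Rabs (P M).
Proof.
  intros HXM. destruct HP as (_ & Hodd & _).
  pose proof Psi_zero as P0. pose proof (Rabs_pos X).
  assert (HPM : P M <= 0) by (rewrite <- P0; apply Psi_nonincreasing; lra).
  rewrite (Rabs_left1 (P M)) by lra.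
  assert (Hsym : P X = P (Rabs X) \/ P X = - P (Rabs X)).
  { destruct (Rcase_abs X); [right; rewrite Rabs_left, Hodd, Ropp_involutive
                           | left; rewrite Rabs_right]; lra. }
  assert (P (Rabs X) <= 0) by (rewrite <- P0; apply Psi_nonincreasing; lra).
  assert (P M <= P (Rabs X)) by (apply Psi_nonincreasing; lra).
  destruct Hsym as [-> | ->]; [rewrite Rabs_left1 | rewrite Rabs_Ropp, Rabs_left1]; lra.
Qed.

Lemma Psi_growth : exists C, 0 < C /\ forall X M, 0 < M -> Rabs X <= M ->
  Rabs (P X) <= C * Rpower M (/ (2 * INR k + 1)).
Proof.
  pose proof HP as (_ & _ & _ & _ & _ & _ & C & HC & HB).
  exists C; split; [exact HC |]. intros X M HM HXM.
  set (p := / (2 * INR k + 1)).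
  assert (Hp : p <= 1).
  { pose proof (pos_INR k). unfold p. rewrite <- Rinv_1. apply Rinv_le_contravar; lra. }
  assert (Hsplit : Rpower M p = M * Rpower M (p - 1)).
  { rewrite <- (Rpower_1 M) at 2 by lra. rewrite <- Rpower_plus. f_equal; ring. }
  assert (Hbase : Rpower (1 + M) (p - 1) <= Rpower M (p - 1))
    by (apply Rpower_le_base_nonpos; lra).
  eapply Rle_trans; [apply (Psi_abs_mono X M HXM) |].
  eapply Rle_trans; [apply (proj2 (HB M)) |].
  rewrite Rabs_right, Hsplit by lra. apply Rmult_le_compat_l; [lra |].
  fold p. apply Rmult_le_compat_l; lra.
Qed.

Lemma Psi_scaled_bound : (1 <= k)%nat -> forall A, 0 < A ->
  exists C, forall d j m, 0 < d < 1 -> (1 <= j <= m)%nat -> (k <= m)%nat ->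
  forall X, Rabs X <= A * Rpower d (/ (2 * INR j)) / Rpower d (alpha k) ->
  Rpower d (/ (2 * INR k)) * Rabs (P X) <= C * Rpower d (/ (2 * INR m * (2 * INR m + 1))).
Proof.
  intros Hk A HA. destruct Psi_growth as (C0 & HC0 & Hgrowth).
  set (p := / (2 * INR k + 1)).
  exists (C0 * Rpower A p). intros d j m Hd Hjm Hkm X HX.
  assert (HK : 1 <= INR k) by (apply (le_INR 1); lia).
  assert (HJ : 1 <= INR j) by (apply (le_INR 1); lia).
  assert (HKM : INR k <= INR m) by (apply le_INR; lia).
  assert (HJM : INR j <= INR m) by (apply le_INR; lia).
  set (e := / (2 * INR j) - alpha k).
  assert (HM : A * Rpower d (/ (2 * INR j)) / Rpower d (alpha k) = A * Rpower d e).
  { unfold e, Rminus, Rdiv. rewrite Rpower_plus, Rpower_Ropp. ring. }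
  rewrite HM in HX.
  assert (HMpos : 0 < A * Rpower d e) by (pose proof (Rpower_pos d e); nra).
  assert (HMp : Rpower (A * Rpower d e) p = Rpower A p * Rpower d (e * p)).
  { rewrite <- Rpower_mult_distr, Rpower_mult; auto using Rpower_pos. }
  assert (Hexp : / (2 * INR k) + e * p = / (2 * INR j * (2 * INR k + 1))).
  { unfold e, p, alpha. field. lra. }
  assert (Hcmp : / (2 * INR m * (2 * INR m + 1)) <= / (2 * INR j * (2 * INR k + 1))).
  { apply Rinv_le_contravar; [nra |].
    assert (INR j * (2 * INR k + 1) <= INR m * (2 * INR m + 1))
      by (apply Rmult_le_compat; lra). lra. }
  pose proof (Rpower_pos d (/ (2 * INR k))). pose proof (Rpower_pos A p).
  apply Rle_trans with (Rpower d (/ (2 * INR k)) * (C0 * Rpower (A * Rpower d e) p)).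
  { apply Rmult_le_compat_l; [lra | exact (Hgrowth X _ HMpos HX)]. }
  replace (Rpower d (/ (2 * INR k)) * (C0 * Rpower (A * Rpower d e) p))
    with (C0 * Rpower A p * Rpower d (/ (2 * INR k) + e * p))
    by (rewrite HMp, Rpower_plus; ring).
  rewrite Hexp. apply Rmult_le_compat_l; [nra |].
  apply Rpower_le_exp_base_lt1; assumption.
Qed.

End PsiFacts.

Lemma sum_minus (f g : nat -> R) s :
  fold_right Rplus 0 (map f s) - fold_right Rplus 0 (map g s) =
  fold_right Rplus 0 (map (fun x => f x - g x) s).
Proof. induction s as [|a s IH]; simpl; [ring | rewrite <- IH; ring]. Qed.

Lemma sum_lt (f g : nat -> R) s : s <> nil -> (forall x, In x s -> f x < g x) ->
  fold_right Rplus 0 (map f s) < fold_right Rplus 0 (map g s).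
Proof.
  induction s as [|a s IH]; intros Hne Hlt; [congruence |]. simpl.
  pose proof (Hlt a (or_introl eq_refl)).
  destruct s as [|b s]; simpl in *; [lra |].
  assert (fold_right Rplus 0 (map f (b :: s)) < fold_right Rplus 0 (map g (b :: s)))
    by (apply IH; [congruence | intros x Hx; apply Hlt; right; exact Hx]).
  simpl in *; lra.
Qed.

Lemma sum_zero (f : nat -> R) s : (forall x, In x s -> f x = 0) ->
  fold_right Rplus 0 (map f s) = 0.
Proof.
  induction s as [|a s IH]; intros Hz; simpl; [reflexivity |].
  rewrite (Hz a (or_introl eq_refl)), IH; [ring |].
  intros x Hx; apply Hz; right; exact Hx.
Qed.

Lemma sum_uniform_bound {A : Type} (f : nat -> A -> R) (B : A -> R) (Q : A -> Prop) s :
  (forall x, In x s -> exists C, forall a, Q a -> Rabs (f x a) <= C * B a) ->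
  exists C, forall a, Q a -> Rabs (fold_right Rplus 0 (map (fun x => f x a) s)) <= C * B a.
Proof.
  induction s as [|x s IH]; intros Hb.
  - exists 0. intros a _; simpl. rewrite Rabs_R0; lra.
  - destruct (Hb x (or_introl eq_refl)) as [C1 H1].
    destruct IH as [C2 H2]; [intros y Hy; apply Hb; right; exact Hy |].
    exists (C1 + C2). intros a Ha. simpl.
    eapply Rle_trans; [apply Rabs_triang |].
    pose proof (H1 a Ha); pose proof (H2 a Ha). lra.
Qed.

Lemma imax_ge (i : nat -> nat) s l : In l s -> (i l <= fold_right Nat.max 0 (map i s))%nat.
Proof. induction s as [|a s IH]; simpl; [tauto |]. intros [-> | H]; [| specialize (IH H)]; lia. Qed.

Section Centres.
Variables (i : nat -> nat) (d : R).
Let c := Rpower d (/ (2 * INR (i 1%nat))).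

Lemma y0_succ l : (1 <= l)%nat -> y0 i d (S l) = y0 i d l + 3 * c.
Proof.
  intros Hl. unfold y0; fold c. replace (S l - 1)%nat with (S (l - 1)) by lia.
  rewrite S_INR. ring.
Qed.

Lemma y0_first : y0 i d 1 = 0.
Proof. unfold y0. simpl. ring. Qed.

Lemma y0_range L l : (1 <= l <= L)%nat -> 0 <= y0 i d l <= 3 * INR L * c.
Proof.
  intros Hl. unfold y0; fold c.
  pose proof (Rpower_pos d (/ (2 * INR (i 1%nat)))) as Hc. fold c in Hc.
  assert (INR (l - 1) <= INR L) by (apply le_INR; lia). pose proof (pos_INR (l - 1)).
  nra.
Qed.

Lemma y0_outside_window l :
  ~ (4 / 3 * c <= y0 i d l <= 5 / 3 * c).
Proof.
  pose proof (Rpower_pos d (/ (2 * INR (i 1%nat)))) as Hc. fold c in Hc.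
  unfold y0; fold c. destruct (l - 1)%nat as [|n].
  - simpl INR. lra.
  - rewrite S_INR. pose proof (pos_INR n). nra.
Qed.

Lemma zero_outside_window : ~ (4 / 3 * c <= 0 <= 5 / 3 * c).
Proof. rewrite <- y0_first. apply y0_outside_window. Qed.

End Centres.

Definition hterm (i : nat -> nat) (Psi : nat -> R -> R) (d : R) (l l' : nat) : R :=
  Rpower d (/ (2 * INR (i l'))) *
    (Psi (i l') ((y0 i d l - y0 i d l') / Rpower d (alpha (i l')))
     - Psi (i l') (- y0 i d l' / Rpower d (alpha (i l')))).

Lemma h_as_sum L i Psi d l : h L i Psi d l = fold_right Rplus 0 (map (hterm i Psi d l) (seq 1 L)).
Proof. reflexivity. Qed.

Section Jumps.
Variables (L : nat) (i : nat -> nat) (Psi : nat -> R -> R).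
Hypothesis HL : (1 <= L)%nat.
Hypothesis Hi : forall l, (1 <= l <= L)%nat -> (1 <= i l)%nat.
Hypothesis HPsi : forall k, (1 <= k)%nat -> IsPsi k (Psi k).

Lemma seq_nonempty : seq 1 L <> nil.
Proof. destruct L; [lia | discriminate]. Qed.

Lemma in_seq_range l' : In l' (seq 1 L) -> (1 <= l' <= L)%nat.
Proof. intros H. apply in_seq in H. lia. Qed.

(* Since eps vanishes at 0 and at the centres, the jump of u_0 is h_l. *)
Lemma h_is_jump d eps l :
  (forall x, ~ (4 / 3 * Rpower d (/ (2 * INR (i 1%nat))) <= x
                <= 5 / 3 * Rpower d (/ (2 * INR (i 1%nat)))) -> eps x = 0) ->
  h L i Psi d l = u0 L i Psi d eps (y0 i d l) - u0 L i Psi d eps 0.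
Proof.
  intros Heps. unfold u0, sumL.
  rewrite (Heps 0) by apply zero_outside_window.
  rewrite (Heps (y0 i d l)) by apply y0_outside_window.
  rewrite !Rplus_0_r, sum_minus, h_as_sum.
  f_equal. apply map_ext. intros l'. unfold hterm, Rdiv, Rminus.
  rewrite Rpower_Ropp, Rplus_0_l. ring.
Qed.

Lemma hterm_decreasing d l1 l2 l' : 0 < d -> (1 <= l' <= L)%nat ->
  y0 i d l1 < y0 i d l2 -> hterm i Psi d l2 l' < hterm i Psi d l1 l'.
Proof.
  intros Hd Hl' Hy. unfold hterm.
  destruct (HPsi (i l') (Hi l' Hl')) as (_ & _ & Hdec & _).
  pose proof (Rpower_pos d (/ (2 * INR (i l')))).
  assert (Psi (i l') ((y0 i d l2 - y0 i d l') / Rpower d (alpha (i l')))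
          < Psi (i l') ((y0 i d l1 - y0 i d l') / Rpower d (alpha (i l')))).
  { apply Hdec. unfold Rdiv. apply Rmult_lt_compat_r; [apply Rinv_0_lt_compat, Rpower_pos | lra]. }
  nra.
Qed.

Lemma h_decreasing d l1 l2 : 0 < d -> y0 i d l1 < y0 i d l2 -> h L i Psi d l2 < h L i Psi d l1.
Proof.
  intros Hd Hy. rewrite !h_as_sum. apply sum_lt; [exact seq_nonempty |].
  intros l' Hl'. apply hterm_decreasing; auto using in_seq_range.
Qed.

(* At the first centre y_{1,0} = 0 every contribution vanishes. *)
Lemma h_first d : h L i Psi d 1 = 0.
Proof.
  rewrite h_as_sum. apply sum_zero. intros l' _. unfold hterm.
  rewrite y0_first, Rminus_0_l. ring.
Qed.

Lemma h_negative d l : 0 < d -> (2 <= l)%nat -> h L i Psi d l < 0.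
Proof.
  intros Hd Hl. rewrite <- (h_first d). apply h_decreasing; [exact Hd |].
  replace l with (S (l - 1)) by lia. rewrite (y0_succ i d (l - 1)) by lia.
  pose proof (y0_range i d (l - 1) (l - 1) ltac:(lia)).
  pose proof (Rpower_pos d (/ (2 * INR (i 1%nat)))). rewrite y0_first. lra.
Qed.

Lemma h_succ_lt d l : 0 < d -> (1 <= l)%nat -> h L i Psi d (S l) < h L i Psi d l.
Proof.
  intros Hd Hl. apply h_decreasing; [exact Hd |].
  rewrite y0_succ by exact Hl. pose proof (Rpower_pos d (/ (2 * INR (i 1%nat)))). lra.
Qed.

Lemma hterm_small l' : (1 <= l' <= L)%nat ->
  exists C, forall p : R * nat, 0 < fst p < 1 /\ (1 <= snd p <= L)%nat ->
  Rabs (hterm i Psi (fst p) (snd p) l')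
  <= C * Rpower (fst p) (/ (2 * INR (imax L i) * (2 * INR (imax L i) + 1))).
Proof.
  intros Hl'. set (m := imax L i). set (k := i l').
  assert (Hk : (1 <= k)%nat) by (apply Hi; exact Hl').
  assert (Hm : forall n, (1 <= n <= L)%nat -> (i n <= m)%nat)
    by (intros n Hn; apply imax_ge, in_seq; lia).
  assert (Hi1 : (1 <= i 1%nat <= m)%nat) by (split; [apply Hi | apply Hm]; lia).
  assert (HA : 0 < 3 * INR L) by (assert (1 <= INR L) by (apply (le_INR 1); lia); lra).
  destruct (Psi_scaled_bound k (Psi k) (HPsi k Hk) Hk (3 * INR L) HA) as [C1 H1].
  exists (2 * C1). intros [d l] [Hd Hl]; simpl fst; simpl snd.
  set (c := Rpower d (/ (2 * INR (i 1%nat)))). set (D := Rpower d (alpha k)).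
  assert (HD : 0 < D) by apply Rpower_pos.
  assert (Hscaled : forall x, Rabs x <= 3 * INR L * c ->
            Rpower d (/ (2 * INR k)) * Rabs (Psi k (x / D)) <= C1 * Rpower d (/ (2 * INR m * (2 * INR m + 1)))).
  { intros x Hx. apply (H1 d (i 1%nat) m Hd Hi1 (Hm l' Hl')).
    unfold Rdiv. rewrite Rabs_mult, Rabs_inv, (Rabs_right D) by lra.
    apply Rmult_le_compat_r; [left; apply Rinv_0_lt_compat |]; assumption. }
  pose proof (y0_range i d L l Hl) as Hyl. pose proof (y0_range i d L l' Hl') as Hyl'.
  fold c in Hyl, Hyl'.
  pose proof (Hscaled (y0 i d l - y0 i d l') ltac:(apply Rabs_le; lra)).
  pose proof (Hscaled (- y0 i d l') ltac:(rewrite Rabs_Ropp, Rabs_right; lra)).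
  unfold hterm; fold k D.
  rewrite Rabs_mult, (Rabs_right (Rpower _ _)) by (left; apply Rpower_pos).
  pose proof (Rabs_triang (Psi k ((y0 i d l - y0 i d l') / D)) (- Psi k (- y0 i d l' / D))).
  rewrite Rabs_Ropp in *. pose proof (Rpower_pos d (/ (2 * INR k))).
  unfold Rminus at 1. nra.
Qed.

Lemma h_small : exists C, forall d l, 0 < d < 1 -> (1 <= l <= L)%nat ->
  Rabs (h L i Psi d l) <= C * Rpower d (/ (2 * INR (imax L i) * (2 * INR (imax L i) + 1))).
Proof.
  destruct (sum_uniform_bound (fun l' p => hterm i Psi (fst p) (snd p) l')
    (fun p => Rpower (fst p) (/ (2 * INR (imax L i) * (2 * INR (imax L i) + 1))))
    (fun p => 0 < fst p < 1 /\ (1 <= snd p <= L)%nat) (seq 1 L)) as [C HC].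
  { intros l' Hl'. apply hterm_small, in_seq_range, Hl'. }
  exists C. intros d l Hd Hl. rewrite h_as_sum. exact (HC (d, l) (conj Hd Hl)).
Qed.

End Jumps.

Theorem lemma2p1 (L : nat) (i : nat -> nat) (Psi : nat -> R -> R) :
  (2 <= L)%nat ->
  (forall l, (1 <= l <= L)%nat -> (1 <= i l)%nat) ->
  (forall k, (1 <= k)%nat -> IsPsi k (Psi k)) ->
  (forall delta, 0 < delta < 1 ->
     (forall eps : R -> R,
        (forall x, ~ (4 / 3 * Rpower delta (/ (2 * INR (i 1%nat))) <= x
                      <= 5 / 3 * Rpower delta (/ (2 * INR (i 1%nat)))) -> eps x = 0) ->
        forall l, (1 <= l <= L)%nat ->
          h L i Psi delta l = u0 L i Psi delta eps (y0 i delta l) - u0 L i Psi delta eps 0) /\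
     (forall l, (2 <= l <= L)%nat -> h L i Psi delta l < 0) /\
     (forall l, (2 <= l <= L - 1)%nat -> h L i Psi delta (S l) < h L i Psi delta l)) /\
  (exists C delta0, 0 < delta0 /\
     forall delta, 0 < delta < delta0 ->
       forall l, (2 <= l <= L)%nat ->
         Rabs (h L i Psi delta l)
         <= C * Rpower delta (/ (2 * INR (imax L i) * (2 * INR (imax L i) + 1)))).
Proof.
  intros HL Hi HPsi.
  assert (HL1 : (1 <= L)%nat) by lia.
  split.
  - intros d Hd. split; [| split].
    + intros eps Heps l _. apply h_is_jump, Heps.
    + intros l Hl. apply (h_negative L i Psi HL1 Hi HPsi); lra || lia.
    + intros l Hl. apply (h_succ_lt L i Psi HL1 Hi HPsi); lra || lia.
  - destruct (h_small L i Psi HL1 Hi HPsi) as [C HC].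
    exists C, 1. split; [lra |]. intros d Hd l Hl. apply HC; lra || lia.
Qed.
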